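(* Let $(X_c,\Lambda_c)\in \mathbb{K}^{n \times p} \times \mathbb{K}^{p \times p}$ be an invariant pair of $Q(\lambda)=\lambda^2 M+\lambda D+K \in \mathbb{Q}_n(\star,\epsilon_1,\epsilon_2)$ with $\mathrm{rank}(X_c)=p \leq n$. Suppose $X_c=\begin{bmatrix}Q_1& Q_2\end{bmatrix} \begin{bmatrix}R\\ 0\end{bmatrix}$ where $R\in \mathbb{K}^{p\times p}$ is nonsingular and $Q=\begin{bmatrix}Q_1& Q_2\end{bmatrix} \in\mathbb{K}^{n\times n}$ satisfies $Q^{\star} Q=QQ^{\star}=I_n$. Let $\Lambda_a \in \mathbb{K}^{p \times p}$. Set $$\Delta M=Q \begin{bmatrix}-Q_1^{\star} M Q_1& \epsilon_1 M_{12}^\star \\ M_{12}& M_{22}\end{bmatrix}Q^{\star},\quad \Delta D=Q \begin{bmatrix}-Q_1^{\star} D Q_1& \epsilon_2 D_{12}^\star \\ D_{12}& D_{22}\end{bmatrix}Q^{\star},\quad \Delta K=Q \begin{bmatrix}-Q_1^{\star} K Q_1& \epsilon_1 K_{12}^\star \\ K_{12}& K_{22}\end{bmatrix}Q^{\star}$$ with $M_{12}=[Z_1-WS(\Lambda_a^2)^*]R^{-1}$, $D_{12}=[Z_2-WS \Lambda_a^*]R^{-1}$, $K_{12}=[Z_3-WS]R^{-1}$, where $M_{22}=\epsilon_1 M_{22}^\star$, $D_{22}=\epsilon_2 D_{22}^\star$, $K_{22}=\epsilon_1 K_{22}^\star$ are arbitrary matrices of order $(n-p) \times (n-p)$, $W=Q_2^{\star}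 MX_c(\Lambda_a^2-\Lambda_c^2)+Q_2^{\star} DX_c(\Lambda_a-\Lambda_c)+Z_1\Lambda_a^2+Z_2\Lambda_a+Z_3$, $S=((\Lambda_a^2)^*\Lambda_a^2+\Lambda_a^* \Lambda_a+I_p)^{-1}$, and $Z_1,Z_2,Z_3 \in \mathbb{K}^{(n-p) \times p}$ are arbitrary. Then $(X_c,\Lambda_a)$ is an invariant pair of $Q_\Delta (\lambda)=\lambda^2 (M+\Delta M)+\lambda (D+\Delta D)+ (K+\Delta K) \in \mathbb{Q}_n(\star,\epsilon_1,\epsilon_2)$.
   Context: $\mathbb{K}\in\{\mathbb{R},\mathbb{C}\}$, $\star\in\{*,T\}$ (conjugate transpose or transpose), $\epsilon_1,\epsilon_2\in\{1,-1\}$. $\mathbb{Q}_n(\star,\epsilon_1,\epsilon_2)$ is the set of quadratic matrix polynomials $\lambda^2M+\lambda D+K\in\mathbb{K}^{n\times n}[\lambda]$ with $M^\star=\epsilon_1M$, $D^\star=\epsilon_2D$, $K^\star=\epsilon_1K$. For $X\in\mathbb{K}^{n\times p}$, $\Lambda\in\mathbb{K}^{p\times p}$, $(X,\Lambda)$ is an invariant pair of $\lambda^2M+\lambda D+K$ if $MX\Lambda^2+DX\Lambda+KX=0$. *)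

From HB Require Import structures.
From mathcomp Require Import all_boot all_algebra.
From mathcomp Require Import reals complex.
Set Implicit Arguments. Unset Strict Implicit. Unset Printing Implicit Defensive.
Import GRing.Theory Num.Theory.
Local Open Scope ring_scope.

(* Generic setting: a field F (either R or C = R[i]) together with its
   conjugation cj (identity on R, complex conjugation on C). *)
Section Generic.
Variable F : fieldType.
Variable cj : F -> F.

Definition ctr m n (A : 'M[F]_(m, n)) : 'M[F]_(n, m) := (map_mx cj A)^T.

Definition startr (conjt : bool) m n (A : 'M[F]_(m, n)) : 'M[F]_(n, m) :=
  if conjt then ctr A else A^T.

(* epsilon in {1,-1}, encoded by a boolean: sgn false = 1, sgn true = -1 *)
Definition sgn (e : bool) : F := (-1) ^+ e.

Definition in_Qn (conjt e1 e2 : bool) n (M D K : 'M[F]_n) : Prop :=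
  [/\ startr conjt M = sgn e1 *: M,
      startr conjt D = sgn e2 *: D &
      startr conjt K = sgn e1 *: K].

Definition invariant_pair n p (M D K : 'M[F]_n) (X : 'M[F]_(n, p))
    (L : 'M[F]_p) : Prop :=
  M *m X *m (L *m L) + D *m X *m L + K *m X = 0.

(* The statement of Theorem 3.5, for K = F with conjugation cj.
   Dimensions: p, q with n = p + q (so q = n - p and p <= n).
   Q = [Q1 Q2] with Q1 = lsubmx Q (n x p), Q2 = rsubmx Q (n x q). *)
Definition Theorem35 : Prop :=
  forall (conjt e1 e2 : bool) (p q : nat)
    (M D K : 'M[F]_(p + q)) (Xc : 'M[F]_(p + q, p)) (Lc La : 'M[F]_p)
    (Rm : 'M[F]_p) (Q : 'M[F]_(p + q))
    (M22 D22 K22 : 'M[F]_q) (Z1 Z2 Z3 : 'M[F]_(q, p)),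
  in_Qn conjt e1 e2 M D K ->
  invariant_pair M D K Xc Lc ->
  \rank Xc = p ->
  Xc = Q *m col_mx Rm 0 ->
  Rm \in unitmx ->
  startr conjt Q *m Q = 1%:M ->
  Q *m startr conjt Q = 1%:M ->
  startr conjt M22 = sgn e1 *: M22 ->
  startr conjt D22 = sgn e2 *: D22 ->
  startr conjt K22 = sgn e1 *: K22 ->
  let Q1 : 'M[F]_(p + q, p) := lsubmx Q in
  let Q2 : 'M[F]_(p + q, q) := rsubmx Q in
  let La2 := La *m La in
  let Lc2 := Lc *m Lc in
  let W := startr conjt Q2 *m M *m Xc *m (La2 - Lc2)
           + startr conjt Q2 *m D *m Xc *m (La - Lc)
           + Z1 *m La2 + Z2 *m La + Z3 in
  let S := invmx (ctr La2 *m La2 + ctr La *m La + 1%:M) in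
  let M12 := (Z1 - W *m S *m ctr La2) *m invmx Rm in
  let D12 := (Z2 - W *m S *m ctr La) *m invmx Rm in
  let K12 := (Z3 - W *m S) *m invmx Rm in
  let dM := Q *m block_mx (- (startr conjt Q1 *m M *m Q1))
                          (sgn e1 *: startr conjt M12) M12 M22
              *m startr conjt Q in
  let dD := Q *m block_mx (- (startr conjt Q1 *m D *m Q1))
                          (sgn e2 *: startr conjt D12) D12 D22
              *m startr conjt Q in
  let dK := Q *m block_mx (- (startr conjt Q1 *m K *m Q1))
                          (sgn e1 *: startr conjt K12) K12 K22
              *m startr conjt Q in
  invariant_pair (M + dM) (D + dD) (K + dK) Xc La /\
  in_Qn conjt e1 e2 (M + dM) (D + dD) (K + dK).

End Generic.

From mathcomp Require Import all_boot all_algebra.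
From mathcomp Require Import reals complex.
Import GRing.Theory Num.Theory.
Set Implicit Arguments. Unset Strict Implicit. Unset Printing Implicit Defensive.
Local Open Scope ring_scope.

(* Since Q^star Q = 1 and Xc = Q1 R, the perturbation Q B Q^star acts on Xc
   through the first block column of B: Q^star (Q B Q^star) Xc = [B11 R; B21 R].
   The block B11 = -(Q1^star M Q1) cancels the Q1-component of the new
   residual.  In the Q2-component, the old invariant pair turns
   Q2^star (M Xc La^2 + D Xc La + K Xc) + Z1 La^2 + Z2 La + Z3 into W, and the
   corrections subtract W S ((La^2)^* La^2 + La^* La + 1) = W; that matrix is
   positive definite, hence invertible.  The symmetry class survives because
   the off-diagonal blocks come in pairs (eps B^star, B) and congruence by Q
   preserves it. *)

Section StarTranspose.
Variable F : fieldType.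
Variable cj : {rmorphism F -> F}.
Hypothesis cjK : involutive cj.

Local Notation ctr := (ctr cj).
Local Notation st := (startr cj).

Lemma ctr_mul m n k (A : 'M[F]_(m, n)) (B : 'M[F]_(n, k)) :
  ctr (A *m B) = ctr B *m ctr A.
Proof. by rewrite /ctr map_mxM trmx_mul. Qed.

Lemma ctrK m n (A : 'M[F]_(m, n)) : ctr (ctr A) = A.
Proof.
by rewrite /ctr map_trmx trmxK; apply/matrixP => i j; rewrite !mxE cjK.
Qed.

Lemma startr_mul c m n k (A : 'M[F]_(m, n)) (B : 'M[F]_(n, k)) :
  st c (A *m B) = st c B *m st c A.
Proof. by case: c; rewrite /startr ?ctr_mul ?trmx_mul. Qed.

Lemma startrK c m n (A : 'M[F]_(m, n)) : st c (st c A) = A.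
Proof. by case: c; rewrite /startr ?ctrK ?trmxK. Qed.

Lemma startrD c m n (A B : 'M[F]_(m, n)) : st c (A + B) = st c A + st c B.
Proof. by case: c; rewrite /startr /ctr ?map_mxD linearD. Qed.

Lemma startrN c m n (A : 'M[F]_(m, n)) : st c (- A) = - st c A.
Proof. by case: c; rewrite /startr /ctr ?map_mxN linearN. Qed.

Lemma startr_sgnZ c e m n (A : 'M[F]_(m, n)) :
  st c (sgn F e *: A) = sgn F e *: st c A.
Proof. by case: c; rewrite /startr /ctr ?map_mxZ /sgn ?rmorph_sign linearZ. Qed.

Lemma startr_block c m1 m2 n1 n2 (A : 'M[F]_(m1, n1)) (B : 'M[F]_(m1, n2))
    (C : 'M[F]_(m2, n1)) (D : 'M[F]_(m2, n2)) :
  st c (block_mx A B C D) = block_mx (st c A) (st c C) (st c B) (st c D).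
Proof. by case: c; rewrite /startr /ctr ?map_block_mx tr_block_mx. Qed.

Lemma startr_row c m n1 n2 (A : 'M[F]_(m, n1)) (B : 'M[F]_(m, n2)) :
  st c (row_mx A B) = col_mx (st c A) (st c B).
Proof. by case: c; rewrite /startr /ctr ?map_row_mx tr_row_mx. Qed.

Lemma sgnZK e m n (A : 'M[F]_(m, n)) : sgn F e *: (sgn F e *: A) = A.
Proof. by rewrite scalerA /sgn -signr_addb addbb scale1r. Qed.

Section Symmetric.
Variables (c e : bool).
Local Notation sym A := (st c A = sgn F e *: A).

Lemma sym_add n (A B : 'M[F]_n) : sym A -> sym B -> sym (A + B).
Proof. by move=> hA hB; rewrite startrD hA hB scalerDr. Qed.

Lemma sym_opp n (A : 'M[F]_n) : sym A -> sym (- A).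
Proof. by move=> hA; rewrite startrN hA scalerN. Qed.

Lemma sym_congr m n (P : 'M[F]_(m, n)) (A : 'M[F]_n) :
  sym A -> sym (P *m A *m st c P).
Proof.
by move=> hA; rewrite !startr_mul startrK hA -scalemxAl -scalemxAr mulmxA.
Qed.

Lemma sym_block m n (A : 'M[F]_m) (C : 'M[F]_(n, m)) (D : 'M[F]_n) :
  sym A -> sym D -> sym (block_mx A (sgn F e *: st c C) C D).
Proof.
move=> hA hD.
by rewrite startr_block startr_sgnZ startrK hA hD scale_block_mx sgnZK.
Qed.

Lemma sym_perturbation p q m (Q : 'M[F]_(m, p + q)) (P : 'M[F]_(m, p))
    (A : 'M[F]_m) (C : 'M[F]_(q, p)) (D : 'M[F]_q) :
  sym A -> sym D ->
  sym (A + Q *m block_mx (- (st c P *m A *m P)) (sgn F e *: st c C) C D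
          *m st c Q).
Proof.
move=> hA hD; apply/sym_add/sym_congr/sym_block => //.
by apply/sym_opp; rewrite -[in X in _ *m X](startrK c P); apply: sym_congr.
Qed.

End Symmetric.

Section UnitaryBasis.
Variables (c : bool) (p q : nat) (Q : 'M[F]_(p + q)).
Local Notation Q1 := (lsubmx Q).
Local Notation Q2 := (rsubmx Q).

Lemma startr_hsub : st c Q = col_mx (st c Q1) (st c Q2).
Proof. by rewrite -[in LHS](hsubmxK Q) startr_row. Qed.

Variables (R : 'M[F]_p) (X : 'M[F]_(p + q, p)).
Hypothesis QtQ : st c Q *m Q = 1%:M.
Hypothesis defX : X = Q *m col_mx R 0.

Lemma lsub_mul_basis : Q1 *m R = X.
Proof. by rewrite defX -[in RHS](hsubmxK Q) mul_row_col mulmx0 addr0. Qed.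

Lemma compress_perturbation k (A : 'M[F]_(p + q)) (B : 'M[F]_(p, q))
    (C : 'M[F]_(q, p)) (D : 'M[F]_q) (Z : 'M[F]_(p, k)) :
  st c Q *m ((A + Q *m block_mx (- (st c Q1 *m A *m Q1)) B C D *m st c Q)
             *m X *m Z)
  = col_mx (0 : 'M_(p, k)) ((st c Q2 *m A *m X + C *m R) *m Z).
Proof.
have QtX : st c Q *m X = col_mx R 0 by rewrite defX mulmxA QtQ mul1mx.
rewrite !mulmxDl mulmxDr !mulmxA QtQ mul1mx -(mulmxA _ (st c Q) X) QtX.
rewrite mul_block_col !mulmx0 !addr0 startr_hsub !mul_col_mx add_col_mx.
by rewrite !mulNmx -(mulmxA _ Q1 R) lsub_mul_basis addrN.
Qed.

End UnitaryBasis.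

End StarTranspose.

Lemma invariant_pair_shift (F : fieldType) n p (M D K : 'M[F]_n)
    (X : 'M[F]_(n, p)) (Lc La : 'M[F]_p) :
  invariant_pair M D K X Lc ->
  M *m X *m (La *m La) + D *m X *m La + K *m X
  = M *m X *m (La *m La - Lc *m Lc) + D *m X *m (La - Lc).
Proof.
rewrite /invariant_pair => /eqP; rewrite addrC addr_eq0 => /eqP ->.
by rewrite !mulmxBr opprD addrACA.
Qed.

Section PositiveConjugation.
Variable F : numFieldType.
Variable cj : {rmorphism F -> F}.
Hypothesis cjK : involutive cj.
Hypothesis cj_ge0 : forall x, 0 <= x * cj x.

Local Notation ctr := (ctr cj).

Lemma mulmx_ctr_ge0 m (u : 'rV[F]_m) : 0 <= (u *m ctr u) 0 0.
Proof. by rewrite !mxE; apply: sumr_ge0 => j _; rewrite !mxE. Qed.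

Lemma mulmx_ctr_eq0 m (u : 'rV[F]_m) : ((u *m ctr u) 0 0 == 0) = (u == 0).
Proof.
apply/idP/eqP => [|->]; last by rewrite mul0mx mxE.
rewrite mxE psumr_eq0 => [/allP u0|j _]; last by rewrite !mxE.
apply/matrixP => i j; rewrite ord1 !mxE.
have /u0 := mem_index_enum j; rewrite !mxE /= mulf_eq0 fmorph_eq0.
by rewrite orbb => /eqP.
Qed.

Lemma gram_add1_unitmx n (A B : 'M[F]_n) :
  ctr A *m A + ctr B *m B + 1%:M \in unitmx.
Proof.
rewrite unitmxE unitfE; apply/negP => /det0P [v /negPf v0 hv].
have gramE (C : 'M[F]_n) : v *m (ctr C *m C) *m ctr v
    = (v *m ctr C) *m ctr (v *m ctr C) by rewrite ctr_mul (ctrK cjK) !mulmxA.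
have : (v *m (ctr A *m A + ctr B *m B + 1%:M) *m ctr v) 0 0 == 0.
  by rewrite hv mul0mx mxE.
have entryD (Y Y' : 'M[F]_1) : (Y + Y') 0 0 = Y 0 0 + Y' 0 0 by rewrite mxE.
rewrite !mulmxDr !mulmxDl mulmx1 !gramE !entryD.
by rewrite !paddr_eq0 ?addr_ge0 ?mulmx_ctr_ge0 // !mulmx_ctr_eq0 v0 !andbF.
Qed.

Lemma gram_correction m n (A B : 'M[F]_n) (W Z1 Z2 Z3 : 'M[F]_(m, n)) :
  let S := invmx (ctr A *m A + ctr B *m B + 1%:M) in
  (Z1 - W *m S *m ctr A) *m A + (Z2 - W *m S *m ctr B) *m B + (Z3 - W *m S)
  = Z1 *m A + Z2 *m B + Z3 - W.
Proof.
move=> S; have WSN : W *m S *m (ctr A *m A + ctr B *m B + 1%:M) = W.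
  by rewrite -mulmxA mulVmx ?gram_add1_unitmx // mulmx1.
rewrite -[in RHS]WSN !mulmxDr !mulmxA mulmx1 !mulmxBl.
by rewrite (addrACA (Z1 *m A)) (addrACA (Z1 *m A + Z2 *m B)) -!opprD.
Qed.

Lemma perturbed_residual_bottom q n p (Y : 'M[F]_(q, n)) (M D K : 'M[F]_n)
    (X : 'M[F]_(n, p)) (Lc La : 'M[F]_p) (Z1 Z2 Z3 W : 'M[F]_(q, p))
    (S : 'M[F]_p) :
  invariant_pair M D K X Lc ->
  W = Y *m M *m X *m (La *m La - Lc *m Lc) + Y *m D *m X *m (La - Lc)
      + Z1 *m (La *m La) + Z2 *m La + Z3 ->
  S = invmx (ctr (La *m La) *m (La *m La) + ctr La *m La + 1%:M) ->
  (Y *m M *m X + (Z1 - W *m S *m ctr (La *m La))) *m (La *m La)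
  + (Y *m D *m X + (Z2 - W *m S *m ctr La)) *m La
  + (Y *m K *m X + (Z3 - W *m S)) = 0.
Proof.
move=> inv defW ->; rewrite !(mulmxDl (Y *m _ *m X)).
rewrite [X in X + _ = 0]addrACA [LHS]addrACA.
have -> : Y *m M *m X *m (La *m La) + Y *m D *m X *m La + Y *m K *m X
    = Y *m (M *m X *m (La *m La) + D *m X *m La + K *m X).
  by rewrite !mulmxDr !mulmxA.
rewrite gram_correction (invariant_pair_shift _ inv) defW.
by rewrite (mulmxDr Y) !mulmxA !addrA subrr.
Qed.

Theorem theorem35_generic : Theorem35 cj.
Proof.
(* The rank hypothesis is redundant: it follows from Xc = Q [R; 0]. *)
move=> c e1 e2 p q M D K Xc Lc La Rm Q M22 D22 K22 Z1 Z2 Z3 [HM HD HK] Hinv _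
  defX HR QtQ QQt HM22 HD22 HK22 Q1 Q2 La2 Lc2 W S M12 D12 K12 dM dD dK.
split; last by split; apply: sym_perturbation.
have bottom0 : (startr cj c Q2 *m M *m Xc + M12 *m Rm) *m La2
    + (startr cj c Q2 *m D *m Xc + D12 *m Rm) *m La
    + (startr cj c Q2 *m K *m Xc + K12 *m Rm) *m 1%:M = 0.
  rewrite /M12 /D12 /K12 !mulmxKV // mulmx1.
  exact: perturbed_residual_bottom Hinv erefl erefl.
rewrite /invariant_pair -[LHS]mul1mx -QQt -mulmxA -[(K + dK) *m Xc]mulmx1.
rewrite !mulmxDr !(compress_perturbation QtQ defX) -!mulmxDr !add_col_mx.
by rewrite bottom0 !addr0 col_mx0 mulmx0.
Qed.

End PositiveConjugation.

Theorem theorem3p5 (R : realType) :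
  Theorem35 (fun x : R => x) /\ Theorem35 (fun z : R[i] => z^*).
Proof.
split.
- exact: (@theorem35_generic R idfun (fun=> erefl) (fun x => sqr_ge0 x)).
- exact: (@theorem35_generic R[i] conjc (@conjcK R) (@mulcJ_ge0 R)).
Qed.
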